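(* Consider the reputation-based proportional-share reverse auction with ex-post payments described in the context, with budget $B>0$ and worker set $U$. Let $i\in U$ be a worker who bids truthfully ($b_i=c_i$), is selected (i.e. $i\in S$), and is honest, meaning that his internal reputation in the current task satisfies $re_i\ge Re_i$. Then his utility is nonnegative: $u_i=p_i-c_i\ge 0$.
   Context: Setting. A task publisher with budget $B>0$ faces a finite set $U$ of workers. Each worker $i\in U$ has a public accumulated reputation $Re_i\in(0,1]$, a private cost $c_i\ge 0$, and submits a sealed bid $b_i\ge 0$. After the task, each selected worker $i$ receives an internal reputation $re_i\in[0,1]$ (a performance score for the current task). Mechanism. (1) Sort the workers so that $\frac{b_1}{Re_1}\le\frac{b_2}{Re_2}\le\dots\le\frac{b_{|U|}}{Re_{|U|}}$ (ties broken arbitrarily). (2) Starting with $S=\emptyset$ and $i=1$, while $i\le |U|$ and $\frac{b_i}{Re_i}\le \frac{B}{Re_i+\sum_{j\in S}Re_j}$, set $S=S\cup\{i\}$ and $i=i+1$. Let $k=|S|$, so $S=\{1,\dots,k\}$ is the set of winners. (3) Define the payment density threshold $\rho^*=\min\left(\frac{b_{k+1}}{Re_{k+1}},\frac{B}{\sum_{j\in S}Re_j}\right)$ (with $\frac{b_{k+1}}{Re_{k+1}}:=+\infty$ if $k=|U|$). (4) Every worker $i\notin S$ is paid $p_i=0$. Every winner $i\in S$ has payment upper bound $p_i^{up}=Re_i\,\rho^*$. (5) After the task, each winner $i\in S$ gets temporary reward $p_i'=\max\left(\frac{B\, re_i}{\sum_{j\in S}re_j},\ \rho^*\, re_i\right)$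 and final payment $p_i=\min(p_i^{up},p_i')$. Utility of worker $i$: $u_i=0$ if $i\notin S$ and $u_i=p_i-c_i$ if $i\in S$. *)

From HB Require Import structures.
From mathcomp Require Import all_boot all_order all_algebra.
Set Implicit Arguments. Unset Strict Implicit. Unset Printing Implicit Defensive.
Import Order.TTheory GRing.Theory Num.Theory.
Local Open Scope ring_scope.

Section Auction.
Variables (R : realFieldType) (T : finType).
Variables (B : R) (Re re b : T -> R).


Definition bid_density (x : T) : R := b x / Re x.

(* Step (2): greedy selection along the sorted sequence; acc = sum of Re_j, j in S. *)
Fixpoint winners_from (acc : R) (s : seq T) : seq T :=
  match s with
  | [::] => [::]
  | x :: s' =>
      if bid_density x <= B / (Re x + acc) then x :: winners_from (acc + Re x) s'
      else [::]
  end.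

Definition winners (s : seq T) : seq T := winners_from 0 s.

Definition sumRe_S (s : seq T) : R := \sum_(j <- winners s) Re j.
Definition sumre_S (s : seq T) : R := \sum_(j <- winners s) re j.

(* Step (3): rho* = min(b_{k+1}/Re_{k+1}, B / sum_{j in S} Re_j),
   with b_{k+1}/Re_{k+1} = +oo when k = |U|. *)
Definition rho_star (s : seq T) : R :=
  match drop (size (winners s)) s with
  | [::] => B / sumRe_S s
  | y :: _ => Num.min (bid_density y) (B / sumRe_S s)
  end.

Definition pay_up (s : seq T) (i : T) : R := Re i * rho_star s.
Definition pay_tmp (s : seq T) (i : T) : R :=
  Num.max (B * re i / sumre_S s) (rho_star s * re i).
Definition payment (s : seq T) (i : T) : R :=
  if i \in winners s then Num.min (pay_up s i) (pay_tmp s i) else 0.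

Definition utility (c : T -> R) (s : seq T) (i : T) : R :=
  if i \in winners s then payment s i - c i else 0.

End Auction.
Arguments bid_density {R T} Re b x.
Arguments winners {R T} B Re b s.
Arguments utility {R T} B Re re b c s i.

From HB Require Import structures.
From mathcomp Require Import all_boot all_order all_algebra.
Import Order.TTheory GRing.Theory Num.Theory.
Local Open Scope ring_scope.

(* Every winner has bid density at most rho*: it is at most that of the first
   loser because the order is sorted, and at most B / sum_S Re because the last
   winner passed the selection test against the full sum and has the largest
   density among winners.  For an honest winner, re_i >= Re_i makes the ex-post
   reward dominate the cap, so he is paid exactly Re_i rho* >= Re_i (b_i / Re_i) = c_i. *)

Lemma sorted_take_drop {T : eqType} {r : rel T} {s : seq T} {n : nat} {x y : T} :
  transitive r -> sorted r s -> x \in take n s -> y \in drop n s -> r x y.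
Proof.
move=> r_tr; rewrite -[s in sorted _ s](cat_take_drop n) sorted_pairwise //.
by rewrite pairwise_cat => /andP[/allrelP r_take_drop _]; apply: r_take_drop.
Qed.

Section Winners.
Context {R : realFieldType} {T : finType} {B : R} {Re b : T -> R}.

Local Notation density := (bid_density Re b).
Local Notation sorted_by_density :=
  (sorted (fun x y : T => density x <= density y)).

Lemma winners_from_take (acc : R) (s : seq T) :
  winners_from B Re b acc s = take (size (winners_from B Re b acc s)) s.
Proof.
elim: s acc => [|x s IH] acc //=.
by case: ifP => _ //=; rewrite -IH.
Qed.

Lemma winners_from_density_le {acc : R} {s : seq T} {x : T} :
  sorted_by_density s -> x \in winners_from B Re b acc s ->
  density x <= B / (acc + \sum_(j <- winners_from B Re b acc s) Re j).
Proof.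
elim: s acc x => [|y s IH] acc x //= s_sorted.
case: ifP => y_wins //.
rewrite big_cons addrA inE => /orP[/eqP -> | x_next]; last first.
  exact: IH _ _ (path_sorted s_sorted) x_next.
have := IH (acc + Re y) ^~ (path_sorted s_sorted).
move: s_sorted y_wins; case: s {IH} => [|z s] /=.
  by rewrite big_nil addr0 addrC.
case/andP=> yz _ y_wins; case: ifP => z_wins /=; last first.
  by rewrite big_nil addr0 addrC.
by move=> IHz; apply: le_trans yz (IHz z (mem_head _ _)).
Qed.

Lemma winner_density_le_rho_star {s : seq T} {x : T} :
  sorted_by_density s -> x \in winners B Re b s ->
  density x <= rho_star B Re b s.
Proof.
move=> s_sorted x_wins.
have le_budget : density x <= B / sumRe_S B Re b s.
  by have := winners_from_density_le s_sorted x_wins; rewrite add0r.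
rewrite /rho_star; case s_losers: drop => [|y t] //.
rewrite le_min le_budget andbT.
apply: (sorted_take_drop (n := size (winners B Re b s)) _ s_sorted).
- by move=> ? ? ?; apply: le_trans.
- by rewrite -winners_from_take.
- by rewrite s_losers mem_head.
Qed.

End Winners.

Lemma payment_honest_winner {R : realFieldType} {T : finType} {B : R}
    {Re re b : T -> R} {s : seq T} {i : T} :
  i \in winners B Re b s -> 0 <= rho_star B Re b s -> Re i <= re i ->
  payment B Re re b s i = Re i * rho_star B Re b s.
Proof.
move=> i_wins rho_ge0 honest; rewrite /payment i_wins /pay_up.
apply/min_idPl; rewrite /pay_tmp le_max mulrC ler_wpM2l //.
by rewrite orbT.
Qed.

Theorem theorem1 (R : realFieldType) (T : finType) (B : R)
    (Re re c b : T -> R) (s : seq T) (i : T) :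
  0 < B ->
  (forall x, 0 < Re x <= 1) ->
  (forall x, 0 <= re x <= 1) ->
  (forall x, 0 <= c x) ->
  (forall x, 0 <= b x) ->
  perm_eq s (enum T) ->
  sorted (fun x y => bid_density Re b x <= bid_density Re b y) s ->
  b i = c i ->
  i \in winners B Re b s ->
  Re i <= re i ->
  0 <= utility B Re re b c s i.
Proof.
move=> _ Re_range _ _ b_ge0 _ s_sorted truthful i_wins honest.
have Rei_gt0 : 0 < Re i by case/andP: (Re_range i).
have density_ge0 : 0 <= bid_density Re b i by rewrite divr_ge0 // ltW.
have density_le := winner_density_le_rho_star s_sorted i_wins.
have cost_eq : c i = Re i * bid_density Re b i.
  by rewrite -truthful /bid_density mulrC divfK ?gt_eqF.
rewrite /utility i_wins (payment_honest_winner i_wins _ honest); last first.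
  exact: le_trans density_le.
by rewrite subr_ge0 cost_eq ler_pM2l.
Qed.
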